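(* Let $k\ge 2$ and let $\mathcal{C}$ be an optimum distance full flag code on $\mathbb{F}_q^{2k}$. Then $|\mathcal{C}|\le q^k+1$, with equality if and only if the $k$-projected code $\mathcal{C}_k$ is a $k$-spread of $\mathbb{F}_q^{2k}$.
   Context: $q$ is a prime power. For subspaces $\mathcal{U},\mathcal{V}$, $d_S(\mathcal{U},\mathcal{V})=\dim(\mathcal{U}+\mathcal{V})-\dim(\mathcal{U}\cap\mathcal{V})$. A full flag on $\mathbb{F}_q^{2k}$ is a tuple $(\mathcal{F}_1,\ldots,\mathcal{F}_{2k-1})$ of subspaces with $\mathcal{F}_1\subsetneq\cdots\subsetneq\mathcal{F}_{2k-1}$ and $\dim\mathcal{F}_i=i$; a full flag code is a set of at least two full flags, with distance $d_f(\mathcal{C})=\min_{\mathcal{F}\ne\mathcal{F}'}\sum_i d_S(\mathcal{F}_i,\mathcal{F}'_i)$; it is an optimum distance full flag code if $d_f(\mathcal{C})=2k^2$ (the maximum possible value). The $k$-projected code is $\mathcal{C}_k=\{\mathcal{F}_k:\mathcal{F}\in\mathcal{C}\}$. A $k$-spread of $\mathbb{F}_q^{2k}$ is a set of $k$-dimensional subspaces pairwise intersecting trivially, of cardinality $q^k+1$. *)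

From HB Require Import structures.
From mathcomp Require Import all_boot all_order all_algebra all_field.
Set Implicit Arguments. Unset Strict Implicit. Unset Printing Implicit Defensive.
Import GRing.Theory.
Local Open Scope ring_scope.

Section FlagCodes.
Variables (F : finFieldType) (n : nat).

Notation V := ('rV[F]_n).
Notation sub := {vspace V}.

Definition subspace_dist (U W : sub) : nat :=
  (\dim (U + W)%VS - \dim (U :&: W)%VS)%N.

(* A (candidate) flag: F_1, ..., F_{n-1}, with F_{i+1} stored at index i. *)
Definition flag := {ffun 'I_n.-1 -> sub}.

Definition is_full_flag (f : flag) : Prop :=
  (forall i : 'I_n.-1, \dim (f i) = i.+1) /\
  (forall i j : 'I_n.-1, j = i.+1 :> nat -> (f i <= f j)%VS /\ f i != f j).

(* the subspace F_i of a flag (1-based index); 0 outside the range *)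
Definition flag_at (f : flag) (i : nat) : sub :=
  if insub i.-1 is Some j then f j else 0%VS.

Definition flag_dist (f g : flag) : nat :=
  (\sum_(i < n.-1) subspace_dist (f i) (g i))%N.

Definition is_full_flag_code (C : seq flag) : Prop :=
  uniq C /\ (2 <= size C)%N /\ (forall f, f \in C -> is_full_flag f).

Definition code_min_dist_eq (C : seq flag) (d : nat) : Prop :=
  (exists f g, [/\ f \in C, g \in C, f != g & flag_dist f g = d]) /\
  (forall f g, f \in C -> g \in C -> f != g -> (d <= flag_dist f g)%N).

Definition projected_code (C : seq flag) (i : nat) : seq sub :=
  undup [seq flag_at f i | f <- C].

Definition is_spread (k : nat) (S : seq sub) : Prop :=
  uniq S /\ (forall U, U \in S -> \dim U = k) /\
  (forall U W, U \in S -> W \in S -> U != W -> (U :&: W)%VS = 0%VS) /\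
  size S = (#|F| ^ k).+1.

End FlagCodes.

Definition is_optimum_full_flag_code (F : finFieldType) (k : nat)
  (C : seq (flag F (2 * k)%N)) : Prop :=
  is_full_flag_code C /\ code_min_dist_eq C (2 * k ^ 2)%N.

From HB Require Import structures.
From mathcomp Require Import all_boot all_order all_algebra all_field.
From mathcomp Require Import zify.
Import GRing.Theory.

Set Implicit Arguments.
Unset Strict Implicit.
Unset Printing Implicit Defensive.

(* For i-dimensional U, W in F_q^{2k}, d_S(U, W) <= 2 min(i, 2k - i), and these
   bounds add up to 2k^2 over 0 < i < 2k. So in an optimum distance code every
   pair of flags attains all of them; at level k this says that the k-th
   subspaces meet trivially. Hence the projection F |-> F_k is injective and its
   image C_k is a partial spread, whose members have disjoint sets of q^k - 1
   nonzero vectors among the q^{2k} - 1 available: |C| = |C_k| <= q^k + 1, with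
   equality exactly when C_k is a spread. *)

Lemma double_sum_succ m : 2 * \sum_(0 <= i < m) i.+1 = m * m.+1.
Proof.
elim: m => [|m IHm]; first by rewrite big_geq.
by rewrite big_nat_recr //= mulnDr IHm; lia.
Qed.

Lemma sum_minn_symmetric k :
  \sum_(i < (2 * k).-1) minn i.+1 (2 * k - i.+1) = k ^ 2.
Proof.
case: k => [|m]; first by rewrite big_ord0.
rewrite -(big_mkord xpredT (fun i => minn i.+1 (2 * m.+1 - i.+1))).
have -> : (2 * m.+1).-1 = m + m.+1 by lia.
rewrite (big_cat_nat _ (leq_addr m.+1 m)) //=.
have -> : \sum_(0 <= i < m) minn i.+1 (2 * m.+1 - i.+1) = \sum_(0 <= i < m) i.+1.
  by apply: eq_big_nat => i /andP[_ ltim]; lia.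
have -> : \sum_(m <= i < m + m.+1) minn i.+1 (2 * m.+1 - i.+1) =
          \sum_(0 <= i < m.+1) (m.+1 - i).
  by rewrite -{1}[m]add0n big_addn addKn; apply: eq_big_nat => i /andP[_ ltim]; lia.
have -> : \sum_(0 <= i < m.+1) (m.+1 - i) = \sum_(0 <= i < m.+1) i.+1.
  by rewrite big_nat_rev; apply: eq_big_nat => i /andP[_ ltim]; lia.
have := double_sum_succ m; have := double_sum_succ m.+1; lia.
Qed.

Section SubspaceDistance.
Variables (F : finFieldType) (n : nat).
Implicit Types U W : {vspace 'rV[F]_n}.

Lemma dimvf_rV : \dim {:'rV[F]_n} = n.
Proof. by rewrite dimvf /dim /= mul1n. Qed.

Lemma dimv_rV U : \dim U <= n.
Proof. by have := dimvS (subvf U); rewrite dimvf_rV. Qed.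

Lemma subspace_dist_eq_dim U W m : \dim U = m -> \dim W = m ->
  subspace_dist U W = 2 * (m - \dim (U :&: W)).
Proof. by move=> dU dW; have := dimv_sum_cap U W; rewrite /subspace_dist; lia. Qed.

Lemma subspace_dist_le U W m : \dim U = m -> \dim W = m ->
  subspace_dist U W <= 2 * minn m (n - m).
Proof.
move=> dU dW; rewrite (subspace_dist_eq_dim dU dW).
have := dimv_sum_cap U W; have := dimv_rV (U + W); lia.
Qed.

Lemma subspace_dist_eq_double_dim U W m : \dim U = m -> \dim W = m ->
  subspace_dist U W = 2 * m -> (U :&: W)%VS = 0%VS.
Proof.
move=> dU dW; rewrite (subspace_dist_eq_dim dU dW) => dUW.
have := dimvS (capvSl U W); rewrite dU => capUW.
by apply/eqP; rewrite -dimv_eq0; apply/eqP; lia.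
Qed.

Definition nonzero_vectors U : {set 'rV[F]_n} := [set v in U] :\ 0%R.

Lemma card_nonzero_vectors U : #|nonzero_vectors U| = (#|F| ^ \dim U).-1.
Proof.
have := cardsD1 (0 : 'rV[F]_n)%R [set v in U].
by rewrite in_set mem0v add1n cardsE card_vspace => ->.
Qed.

Lemma nonzero_vectorsS U W :
  (U <= W)%VS -> nonzero_vectors U \subset nonzero_vectors W.
Proof.
by move=> sUW; apply/subsetP => v; rewrite !inE => /andP[-> /(subvP sUW)->].
Qed.

Lemma nonzero_vectors_disjoint U W :
  (U :&: W)%VS = 0%VS -> [disjoint nonzero_vectors U & nonzero_vectors W].
Proof.
move=> capUW; rewrite -setI_eq0; apply/eqP/setP => v; rewrite !inE.
apply/negbTE; rewrite andbACA andbb; apply/andP => -[v_nz /andP[vU vW]].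
by move: v_nz; rewrite -memv0 -capUW memv_cap vU vW.
Qed.

End SubspaceDistance.

Lemma card_bigcup_seq_disjoint (T : finType) (I : eqType) (r : seq I)
    (A : I -> {set T}) :
  uniq r -> {in r &, forall i j, i != j -> [disjoint A i & A j]} ->
  #|\bigcup_(i <- r) A i| = \sum_(i <- r) #|A i|.
Proof.
elim: r => [|i r IHr] /=; first by rewrite !big_nil cards0.
case/andP=> ir uniq_r disjA; rewrite !big_cons -IHr //; last first.
  by move=> j l jr lr; apply: disjA; rewrite inE ?jr ?lr orbT.
apply/eqP; rewrite (leq_card_setU (A i)) disjoints_subset setC_bigcup big_seq.
elim/big_ind: _ => [|B1 B2|j jr]; first exact: subsetT.
  by move=> sub1 sub2; rewrite subsetI sub1 sub2.
rewrite -disjoints_subset; apply: disjA; rewrite ?inE ?eqxx ?jr ?orbT //.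
by apply: contraNneq ir => ->.
Qed.

Section PartialSpreads.
Variables (F : finFieldType) (n : nat).
Implicit Types (U W : {vspace 'rV[F]_n}) (S : seq {vspace 'rV[F]_n}).

Definition partial_spread m S :=
  [/\ uniq S, {in S, forall U, \dim U = m}
    & {in S &, forall U W, U != W -> (U :&: W)%VS = 0%VS}].

Lemma is_spreadE m S :
  is_spread m S <-> partial_spread m S /\ size S = (#|F| ^ m).+1.
Proof. by split=> [[uS [dS [capS szS]]] | [[uS dS capS] szS]]. Qed.

Lemma partial_spread_size m S : partial_spread m S ->
  size S * (#|F| ^ m).-1 <= (#|F| ^ n).-1.
Proof.
case=> uS dS capS.
have -> : size S * (#|F| ^ m).-1 = #|\bigcup_(U <- S) nonzero_vectors U|.
  rewrite card_bigcup_seq_disjoint //; last first.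
    by move=> U W US WS UW; apply/nonzero_vectors_disjoint/capS.
  rewrite (eq_big_seq (fun=> (#|F| ^ m).-1)) => [|U US]; last first.
    by rewrite card_nonzero_vectors dS.
  by rewrite big_const_seq count_predT iter_addn_0 mulnC.
rewrite -[in X in _ <= X](dimvf_rV F n) -card_nonzero_vectors; apply/subset_leq_card.
rewrite big_seq; elim/big_ind: _ => [|B1 B2 sub1 sub2|U _]; first exact: sub0set.
  by rewrite subUset sub1 sub2.
exact/nonzero_vectorsS/subvf.
Qed.

Lemma partial_spread_half_size m S : n = 2 * m -> 0 < m -> partial_spread m S ->
  size S <= (#|F| ^ m).+1.
Proof.
move=> n2m m_gt0 /partial_spread_size; rewrite [in X in _ <= X]n2m (mulnC 2) expnM.
have : 1 < #|F| ^ m by rewrite -(exp1n m) ltn_exp2r // finNzRing_gt1.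
set x := #|F| ^ m => x_gt1.
have -> : (x ^ 2).-1 = x.+1 * x.-1 by rewrite expnS expn1; nia.
by rewrite leq_pmul2r //; lia.
Qed.

End PartialSpreads.

Section FullFlags.
Variables (F : finFieldType) (n : nat).
Implicit Types f g : flag F n.

Lemma flag_atE f (i : 'I_n.-1) : flag_at f i.+1 = f i.
Proof. by rewrite /flag_at /= valK. Qed.

Lemma dim_flag_at f i : is_full_flag f -> 0 < i < n -> \dim (flag_at f i) = i.
Proof.
case: i => [|i] [dim_f _] //= lt_i_n.
have lt_i : i < n.-1 by lia.
by rewrite -[i]/(val (Ordinal lt_i)) flag_atE dim_f.
Qed.

Lemma flag_dist_leqif f g : is_full_flag f -> is_full_flag g ->
  flag_dist f g <= \sum_(i < n.-1) 2 * minn i.+1 (n - i.+1)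
    ?= iff [forall i, subspace_dist (f i) (g i) == 2 * minn i.+1 (n - i.+1)].
Proof.
move=> [dim_f _] [dim_g _]; apply: leqif_sum => i _.
exact/leqif_eq/subspace_dist_le.
Qed.

End FullFlags.

Lemma sum_max_subspace_dist k :
  \sum_(i < (2 * k).-1) 2 * minn i.+1 (2 * k - i.+1) = 2 * k ^ 2.
Proof. by rewrite -big_distrr sum_minn_symmetric. Qed.

Lemma max_flag_dist_cap0 (F : finFieldType) k (f g : flag F (2 * k)) :
  0 < k -> is_full_flag f -> is_full_flag g -> 2 * k ^ 2 <= flag_dist f g ->
  (flag_at f k :&: flag_at g k)%VS = 0%VS.
Proof.
move=> k_gt0 full_f full_g dist_ge.
have [dist_le /esym dist_eq] := flag_dist_leqif full_f full_g.
rewrite sum_max_subspace_dist in dist_le dist_eq.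
have lt_k : k.-1 < (2 * k).-1 by lia.
have flag_at_k h : flag_at h k = h (Ordinal lt_k) by rewrite -flag_atE /= prednK.
move: dist_eq; rewrite eqn_leq dist_le dist_ge => /forallP/(_ (Ordinal lt_k)) /eqP.
rewrite /= prednK // -!flag_at_k.
have -> : minn k (2 * k - k) = k by lia.
by apply: subspace_dist_eq_double_dim; apply: dim_flag_at => //; lia.
Qed.

Lemma optimum_code_projection (F : finFieldType) k (C : seq (flag F (2 * k))) :
  0 < k -> is_optimum_full_flag_code C ->
  size (projected_code C k) = size C /\ partial_spread k (projected_code C k).
Proof.
move=> k_gt0 [[uniq_C [_ full_C]] [_ min_C]].
have dim_k f : f \in C -> \dim (flag_at f k) = k.
  by move=> fC; apply: dim_flag_at (full_C f fC) _; lia.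
have cap_k : {in C &, forall f g, f != g -> (flag_at f k :&: flag_at g k)%VS = 0%VS}.
  by move=> f g fC gC fg; apply: max_flag_dist_cap0 (min_C f g fC gC fg); auto.
have inj_k : {in C &, injective (fun f : flag F (2 * k) => flag_at f k)}.
  move=> f g fC gC /= fg_k; apply/eqP/negP => /negP fg.
  have := cap_k f g fC gC fg; rewrite fg_k capvv => gk0.
  by have := dim_k g gC; rewrite gk0 dimv0; lia.
have -> : projected_code C k = [seq flag_at f k | f <- C].
  by rewrite /projected_code undup_id // map_inj_in_uniq.
rewrite size_map; split=> //; split; first by rewrite map_inj_in_uniq.
  by move=> _ /mapP[f fC ->]; apply: dim_k.
move=> _ _ /mapP[f fC ->] /mapP[g gC ->] fg_k; apply: cap_k => //.
by apply: contraNneq fg_k => ->.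
Qed.

Theorem theorem4p5 (F : finFieldType) (k : nat) (C : seq (flag F (2 * k))) :
  (2 <= k)%N -> is_optimum_full_flag_code C ->
  (size C <= (#|F| ^ k).+1)%N /\
  (size C = (#|F| ^ k).+1 <-> is_spread k (projected_code C k)).
Proof.
move=> k_ge2 opt_C; have k_gt0 : 0 < k by apply: ltnW.
have [size_proj spread_proj] := optimum_code_projection k_gt0 opt_C.
rewrite -size_proj is_spreadE; split.
  exact: partial_spread_half_size spread_proj.
by split=> [|[]].
Qed.
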